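(* Let $m>1$ and $n>1$ be naturals, let $\mathcal{F}$ be a surjective linear cellular automaton over $(\mathbb{Z}/m\mathbb{Z})^n$ and let $A\in\mathbb{L}_m^{n\times n}$ be its associated matrix. Then there exists an integer $c\geq0$ (depending only on $A$) such that all of the following hold: (C1) for every $\upsilon\in\mathbb{S}_m^n$ with $\deg^+(\upsilon)=0$ there exist an integer $h$ with $-c\le h\le c$ and $\omega\in\mathbb{S}_m^n$ with $\deg^+(\omega)=h$ and $A\omega=\upsilon$; (C2) for every $\upsilon\in\mathbb{S}_m^n$ with $\deg^-(\upsilon)=0$ there exist an integer $h$ with $-c\le h\le c$ and $\omega\in\mathbb{S}_m^n$ with $\deg^-(\omega)=h$ and $A\omega=\upsilon$; (C3) for every $\upsilon\in\mathbb{S}_m^n$ with $\deg^+(\upsilon)=0$ we have $\deg^+(A\upsilon)=h$ for some integer $-c\le h\le c$; (C4) for every $\upsilon\in\mathbb{S}_m^n$ with $\deg^-(\upsilon)=0$ we have $\deg^-(A\upsilon)=h$ for some integer $-c\le h\le c$.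
   Context: $\mathbb{L}_m=\mathbb{Z}/m\mathbb{Z}[X,X^{-1}]$ and $\mathbb{S}_m=\mathbb{Z}/m\mathbb{Z}[[X,X^{-1}]]$ (bi-infinite formal series $\sum_{i\in\mathbb{Z}}a_iX^i$). An element $\upsilon\in\mathbb{S}_m^n$ is regarded as a formal series $\sum_{i\in\mathbb{Z}}v_iX^i$ with $v_i\in(\mathbb{Z}/m\mathbb{Z})^n$; for $\upsilon\neq0$, $\deg^+(\upsilon)=\sup\{i:v_i\neq0\}$ and $\deg^-(\upsilon)=\inf\{i:v_i\neq0\}$ (which may be $+\infty$, resp. $-\infty$); $\deg^+(0)=-\infty$, $\deg^-(0)=+\infty$. Matrices in $\mathbb{L}_m^{n\times n}$ act on $\mathbb{S}_m^n$ by the usual (well-defined) product. A linear cellular automaton over $(\mathbb{Z}/m\mathbb{Z})^n$ is the map $\mathcal{F}$ on $((\mathbb{Z}/m\mathbb{Z})^n)^{\mathbb{Z}}$ given by $\mathcal{F}(c)_i=\sum_{j=-r}^rA_jc_{i+j}$ for some $r\in\mathbb{N}$ and $A_j\in(\mathbb{Z}/m\mathbb{Z})^{n\times n}$; its associated matrix is $\sum_{j=-r}^rA_jX^{-j}$. It is surjective if $\mathcal{F}$ is a surjective map. *)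

From HB Require Import structures.
From mathcomp Require Import all_boot all_order all_algebra.
Set Implicit Arguments. Unset Strict Implicit. Unset Printing Implicit Defensive.
Import Order.TTheory GRing.Theory Num.Theory.
Local Open Scope ring_scope.

(* Elements of S_m^n: bi-infinite formal series sum_i v_i X^i, v_i in (Z/mZ)^n,
   represented by the coefficient function i |-> v_i. *)
Definition series (m n : nat) := int -> 'cV['Z_m]_n.

(* A linear cellular automaton of radius r with local matrices A_j (j in [-r,r]),
   given by coef : int -> 'M_n (only the values on [-r,r] are used):
   F(c)_i = sum_{j=-r}^{r} A_j c_{i+j}.  Its associated matrix is
   sum_j A_j X^{-j}; the product of that Laurent-polynomial matrix with a series
   w = sum_i w_i X^i has coefficient at i equal to sum_j A_j w_{i+j}, i.e.
   the action of the associated matrix on S_m^n coincides with [lca]. *)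
Definition lca (m n r : nat) (coef : int -> 'M['Z_m]_n) (c : series m n) : series m n :=
  fun i => \sum_(k < (2 * r).+1) coef (k%:Z - r%:Z) *m c (i + (k%:Z - r%:Z)).

Definition assoc_mx_act (m n r : nat) (coef : int -> 'M['Z_m]_n) (w : series m n)
  : series m n := lca r coef w.

Definition surjective_lca (m n r : nat) (coef : int -> 'M['Z_m]_n) : Prop :=
  forall d : series m n, exists c : series m n, lca r coef c = d.

Definition degp_eq (m n : nat) (v : series m n) (h : int) : Prop :=
  v h != 0 /\ forall i : int, h < i -> v i = 0.

Definition degm_eq (m n : nat) (v : series m n) (h : int) : Prop :=
  v h != 0 /\ forall i : int, i < h -> v i = 0.

From HB Require Import structures.
From mathcomp Require Import all_boot all_order all_algebra zify.
From Stdlib Require Import FunctionalExtensionality.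
Import Order.TTheory GRing.Theory Num.Theory.
Local Open Scope ring_scope.

(* Surjectivity makes the restriction of the automaton A to a window of L+1
   output cells a surjective additive map on windows of L+2r+1 input cells, so
   its kernel has at most B = #|'M['Z_m]_(n, 2r)| elements, whatever L is.
   Hence if A w vanishes on [a, +oo) and w vanishes far to the right, then w
   vanishes on [a + B, +oo): otherwise the shifts of w by 0, ..., B would be
   B + 1 distinct kernel elements of a single window.  This bounds deg^+(A w)
   below by deg^+(w) - B (C3), and shows that a kernel element vanishing on a
   half-line is 0.
   For (C1), take any preimage w0 of v.  By pigeonhole two of its blocks of 2r
   consecutive cells starting in [1, B + 1] coincide; as A w0 vanishes on
   [1, +oo), the previous fact propagates this coincidence into periodicity of
   w0 on a right half-line.  The periodic extension of that tail lies in the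
   kernel, and subtracting it from w0 leaves a preimage vanishing beyond B.
   (C2) and (C4) follow from (C1) and (C3) under the reflection i |-> -i. *)

Lemma pigeonhole_nat {T : finType} (f : nat -> T) :
  exists j k, (j < k <= #|T|)%N /\ f j = f k.
Proof.
have : ~~ injectiveb (fun j : 'I_#|T|.+1 => f j).
  by apply/injectiveP => /leq_card; rewrite card_ord ltnn.
case/injectivePn => j [k jk ejk].
have [le_j le_k] : (j <= #|T| /\ k <= #|T|)%N by split; rewrite -ltnS ltn_ord.
case: (ltngtP j k) => [lt_jk|lt_kj|/val_inj/eqP]; last by rewrite (negbTE jk).
- by exists j, k; rewrite lt_jk.
- by exists k, j; rewrite lt_kj.
Qed.

Lemma card_ker_mul_le {U V : finZmodType} (f : U -> V) :
  {morph f : x y / x + y} -> (forall y, exists x, f x = y) ->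
  (#|[set x | f x == 0%R]| * #|V| <= #|U|)%N.
Proof.
move=> fD fsurj; set K := [set x | _].
pose pre y := odflt 0 [pick x | f x == y].
have preK y : f (pre y) = y.
  rewrite /pre; case: pickP => [x /eqP //|none].
  by have [x fx] := fsurj y; move: (none x); rewrite fx eqxx.
pose g (yk : V * U) := pre yk.1 + yk.2.
have g_inj : {in setX [set: V] K &, injective g}.
  move=> [y1 k1] [y2 k2]; rewrite !inE /= => /eqP fk1 /eqP fk2 e12.
  have ey : y1 = y2 by move: (congr1 f e12); rewrite /g /= !fD !preK fk1 fk2 !addr0.
  by move: e12; rewrite /g ey /= => /addrI ->.
rewrite mulnC -[X in (X * _)%N]cardsT -cardsX -(card_in_imset g_inj).
exact: max_card.
Qed.

Lemma degp_eq_exists {m n : nat} {x : series m n} {i0 p : int} :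
  x i0 != 0 -> (forall i, p < i -> x i = 0) -> exists2 h, i0 <= h & degp_eq x h.
Proof.
move=> xi0 xp.
have i0p : i0 <= p by rewrite leNgt; apply: contra xi0 => /xp ->.
have e0 : p - `|p - i0|%N%:Z = i0 by lia.
have exk : exists k : nat, x (p - k%:Z) != 0 by exists `|p - i0|%N; rewrite e0.
case: (ex_minnP exk) => k xk kmin; exists (p - k%:Z).
  have : (k <= `|p - i0|)%N by apply: kmin; rewrite e0.
  lia.
split=> // i ki; case: (ltP p i) => [/xp //|ip]; apply/eqP; apply: contraT => xi.
have ei : p - `|p - i|%N%:Z = i by lia.
have : (k <= `|p - i|)%N by apply: kmin; rewrite ei.
lia.
Qed.

(* Shifts [i] by a multiple of [T] into [p, +oo) when [T > 0]. *)
Definition periodic_ext {V : Type} (f : int -> V) (p : int) (T : nat) : int -> V :=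
  fun i => f (i + (`|p - i| * T)%N%:Z).

Section PeriodicExtension.
Context {V : Type} {f : int -> V} {p : int} {T : nat}.
Hypothesis f_per : forall i, p <= i -> f (i + T%:Z) = f i.

Lemma periodic_mul (q : nat) i : p <= i -> f (i + (q * T)%N%:Z) = f i.
Proof.
elim: q i => [|q IHq] i pi; first by rewrite mul0n addr0.
have -> : i + (q.+1 * T)%N%:Z = i + (q * T)%N%:Z + T%:Z by rewrite mulSn; lia.
by rewrite f_per ?IHq //; lia.
Qed.

Hypothesis T_gt0 : (0 < T)%N.

Lemma periodic_extE (q : nat) i : p <= i + (q * T)%N%:Z ->
  periodic_ext f p T i = f (i + (q * T)%N%:Z).
Proof.
move=> pq; rewrite /periodic_ext; set q0 := `|p - i|%N.
have pq0 : p <= i + (q0 * T)%N%:Z by have := leq_pmulr q0 T_gt0; rewrite /q0; lia.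
case: (leqP q0 q) => [le_q0q|/ltnW le_qq0].
  by rewrite -(subnKC le_q0q) mulnDl PoszD addrA [RHS]periodic_mul.
by rewrite -(subnKC le_qq0) mulnDl PoszD addrA [LHS]periodic_mul.
Qed.

Lemma periodic_ext_id i : p <= i -> periodic_ext f p T i = f i.
Proof. by move=> pi; rewrite (periodic_extE 0) mul0n addr0. Qed.

Lemma periodic_extD i : periodic_ext f p T (i + T%:Z) = periodic_ext f p T i.
Proof.
have le_qT := leq_pmulr `|p - i|%N T_gt0.
rewrite (periodic_extE `|p - i|%N); last lia.
rewrite (periodic_extE `|p - i|.+1); last by rewrite mulSn; lia.
by congr f; rewrite mulSn; lia.
Qed.

End PeriodicExtension.

Section LinearCellularAutomaton.
Context {m n r : nat} {coef : int -> 'M['Z_m]_n}.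
Local Notation A := (lca r coef).

Lemma lca_eq_local (x y : series m n) i :
  (forall t, - (r%:Z) <= t <= r%:Z -> x (i + t) = y (i + t)) -> A x i = A y i.
Proof. by move=> xy; apply: eq_bigr => k _; rewrite xy //; have := ltn_ord k; lia. Qed.

Lemma lca_neq0_witness (x : series m n) i :
  A x i != 0 -> exists2 t, - (r%:Z) <= t <= r%:Z & x (i + t) != 0.
Proof.
case: (pickP (fun k : 'I_(2 * r).+1 => x (i + (k%:Z - r%:Z)) != 0)) => [k xk _|x0].
  by exists (k%:Z - r%:Z) => //; have := ltn_ord k; lia.
by rewrite /lca big1 ?eqxx // => k _; move/negbFE/eqP: (x0 k) => ->; rewrite mulmx0.
Qed.

Lemma lca_eq0_local (x : series m n) i :
  (forall t, - (r%:Z) <= t <= r%:Z -> x (i + t) = 0) -> A x i = 0.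
Proof.
by move=> x0; apply/eqP; apply: contraT => /lca_neq0_witness[t /x0 ->]; rewrite eqxx.
Qed.

Lemma lcaB (x y : series m n) i : A (fun j => x j - y j) i = A x i - A y i.
Proof. by rewrite /lca -sumrB; apply: eq_bigr => k _; rewrite mulmxBr. Qed.

Lemma lca_shift (x : series m n) (j : int) i : A (fun p => x (p + j)) i = A x (i + j).
Proof. by apply: eq_bigr => k _; congr (_ *m x _); lia. Qed.

Lemma lca_periodic_eq0 {z : series m n} {T : nat} (a : int) : (0 < T)%N ->
  (forall i, z (i + T%:Z) = z i) -> (forall i, a <= i -> A z i = 0) ->
  forall i, A z i = 0.
Proof.
move=> T_gt0 z_per Az0 i.
have Az_per j : A z (j + T%:Z) = A z j.
  by rewrite -lca_shift; apply: lca_eq_local => t _; rewrite /= z_per.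
have le_qT := leq_pmulr `|a - i|%N T_gt0.
rewrite -(periodic_mul (p := i) (fun j _ => Az_per j) `|a - i|%N) ?Az0 //; lia.
Qed.

Definition block (k : nat) (p : int) (x : series m n) : 'M['Z_m]_(n, k) :=
  \matrix_(i, u) x (p + u%:Z) i 0.

Lemma col_block k p x (u : 'I_k) : col u (block k p x) = x (p + u%:Z).
Proof. by apply/matrixP => i j; rewrite !mxE ord1. Qed.

Definition lca_block (L : nat) (w : 'M['Z_m]_(n, (L + 2 * r).+1)) : 'M['Z_m]_(n, L.+1) :=
  \matrix_(i, t) (\sum_(k < (2 * r).+1) coef (k%:Z - r%:Z) *m col (inord (t + k)) w) i 0.

Lemma lca_blockE L a x : lca_block L (block (L + 2 * r).+1 (a - r%:Z) x) = block L.+1 a (A x).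
Proof.
apply/matrixP => i t; rewrite !mxE; congr (fun_of_matrix _ i 0).
rewrite /lca; apply: eq_bigr => k _.
rewrite col_block inordK; first by congr (_ *m x _); lia.
by have := ltn_ord k; have := ltn_ord t; lia.
Qed.

Lemma lca_blockD L : {morph lca_block L : u v / u + v}.
Proof.
move=> u v; apply/matrixP => i t; rewrite !mxE !summxE -big_split /=.
by apply: eq_bigr => k _; rewrite linearD mulmxDr mxE.
Qed.

Local Notation B := #|{: 'M['Z_m]_(n, 2 * r)}|.

Lemma card_blocks_le_ker L k (a : int) (f : 'I_k -> series m n) :
  (forall j (t : nat), (t <= L)%N -> A (f j) (a + t%:Z) = 0) ->
  injective (fun j => block (L + 2 * r).+1 (a - r%:Z) (f j)) ->
  (k <= #|[set w | lca_block L w == 0%R]|)%N.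
Proof.
move=> f0 f_inj; rewrite -[k in (k <= _)%N]card_ord -(card_imset _ f_inj).
apply/subset_leq_card/subsetP => _ /imsetP[j _ ->]; rewrite inE lca_blockE.
by apply/eqP/matrixP => i t; rewrite !mxE f0 ?mxE // -ltnS.
Qed.

Hypothesis surj : surjective_lca r coef.

Lemma lca_block_surj L y : exists w, lca_block L w = y.
Proof.
have [c Ac] := surj (fun i => col (inord `|i|) y).
exists (block (L + 2 * r).+1 (0 - r%:Z) c); rewrite lca_blockE Ac.
by apply/matrixP => i t; rewrite !mxE add0r absz_nat inord_val.
Qed.

Lemma card_lca_block_ker L : (#|[set w | lca_block L w == 0%R]| <= B)%N.
Proof.
have := card_ker_mul_le (lca_block L) (lca_blockD L) (lca_block_surj L).
rewrite !card_mx; have -> : (n * (L + 2 * r).+1 = n * (2 * r) + n * L.+1)%N.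
  by rewrite -mulnDr; congr (n * _)%N; lia.
by rewrite expnD leq_pmul2r // expn_gt0 card_ord.
Qed.

Lemma lca_tail_eq0 (w : series m n) (a p : int) :
  (forall i, a <= i -> A w i = 0) -> (forall i, p < i -> w i = 0) ->
  forall i, a + B%:Z <= i -> w i = 0.
Proof.
move=> Aw0 wp i ai; apply/eqP; apply: contraT => wi.
have [h ih [wh wh0]] := degp_eq_exists wi wp.
pose f (j : 'I_B.+1) : series m n := fun q => w (q + j%:Z).
pose window j := block (B + 2 * r).+1 (h - B%:Z - r%:Z) (f j).
have windows_differ (j k : 'I_B.+1) : (j < k)%N -> window j != window k.
  move=> jk; have ub : (B - j + r < (B + 2 * r).+1)%N by have := ltn_ord j; lia.
  apply: contra wh => /eqP/(congr1 (col (Ordinal ub))); rewrite !col_block /f /=.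
  have -> : h - B%:Z - r%:Z + (B - j + r)%N%:Z + j%:Z = h by have := ltn_ord j; lia.
  by move=> ->; apply/eqP/wh0; have := ltn_ord j; lia.
suff : (B.+1 <= B)%N by rewrite ltnn.
apply: leq_trans (card_lca_block_ker B).
apply: (card_blocks_le_ker B B.+1 (h - B%:Z) f) => [j t tB|j k ejk].
  by rewrite /f lca_shift Aw0 //; lia.
apply/val_inj; case: (ltngtP j k) => // [jk|kj].
  by move: (windows_differ _ _ jk); rewrite /window ejk eqxx.
by move: (windows_differ _ _ kj); rewrite /window ejk eqxx.
Qed.

Lemma lca_degp (w : series m n) h : degp_eq w h ->
  exists i, h - B%:Z <= i <= h + r%:Z /\ degp_eq (A w) i.
Proof.
case=> wh wh0.
have Aw_above i : h + r%:Z < i -> A w i = 0.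
  by move=> hi; apply: lca_eq0_local => t tr; apply: wh0; lia.
have [i0 i0h Awi0] : exists2 i0, h - B%:Z <= i0 & A w i0 != 0.
  case: (pickP (fun t : 'I_(B + r).+1 => A w (h - B%:Z + t%:Z) != 0)) => [t Awt|Aw0].
    by exists (h - B%:Z + t%:Z) => //; lia.
  suff : w h = 0 by move/eqP: wh.
  apply: (lca_tail_eq0 w (h - B%:Z) h _ wh0); last lia.
  move=> i hi; case: (lerP i (h + r%:Z)) => [ih|/Aw_above //].
  have ub : (`|(i - (h - B%:Z))%R| < (B + r).+1)%N by lia.
  move/negbFE/eqP: (Aw0 (Ordinal ub)) => /=.
  by have -> : h - B%:Z + `|(i - (h - B%:Z))%R|%N%:Z = i by lia.
have [i ii0 [Awi Awi_above]] := degp_eq_exists Awi0 Aw_above.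
have : ~~ (h + r%:Z < i) by apply: contra Awi => /Aw_above ->.
by exists i; split; [lia|].
Qed.

Lemma lca_ker_eq0_rbounded {z : series m n} {p : int} :
  (forall i, A z i = 0) -> (forall i, p < i -> z i = 0) -> forall i, z i = 0.
Proof.
by move=> Az0 zp i; apply: (lca_tail_eq0 z (i - B%:Z) p (fun j _ => Az0 j) zp); lia.
Qed.

End LinearCellularAutomaton.

Definition rev_series {m n : nat} (x : series m n) : series m n := fun i => x (- i).

Lemma lca_rev {m n r : nat} {coef coef' : int -> 'M['Z_m]_n} (x : series m n) i :
  (forall k, coef' k = coef (- k)) -> lca r coef' (rev_series x) i = lca r coef x (- i).
Proof.
move=> coef'E; rewrite /lca (reindex_inj rev_ord_inj) /=; apply: eq_bigr => k _.
by rewrite coef'E /rev_series; congr (coef _ *m x _); have := ltn_ord k; lia.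
Qed.

Lemma surjective_lca_rev {m n r : nat} {coef coef' : int -> 'M['Z_m]_n} :
  (forall k, coef' k = coef (- k)) -> surjective_lca r coef -> surjective_lca r coef'.
Proof.
move=> coef'E surj d; have [c Ac] := surj (rev_series d).
exists (rev_series c); apply: functional_extensionality => i.
by rewrite (lca_rev _ _ coef'E) Ac /rev_series opprK.
Qed.

Lemma degp_eq_rev {m n : nat} (x : series m n) h : degm_eq x h -> degp_eq (rev_series x) (- h).
Proof. by case=> xh xh0; split=> [|i hi]; rewrite /rev_series ?opprK // xh0 //; lia. Qed.

Lemma degm_eq_rev {m n : nat} (x : series m n) h : degp_eq x h -> degm_eq (rev_series x) (- h).
Proof. by case=> xh xh0; split=> [|i hi]; rewrite /rev_series ?opprK // xh0 //; lia. Qed.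

Section Preimages.
Context {m n r : nat} {coef : int -> 'M['Z_m]_n}.
Hypothesis surj : surjective_lca r coef.
Local Notation A := (lca r coef).
Local Notation B := #|{: 'M['Z_m]_(n, 2 * r)}|.

Lemma lca_ker_eq0_lbounded {z : series m n} {p : int} :
  (forall i, A z i = 0) -> (forall i, i < p -> z i = 0) -> forall i, z i = 0.
Proof.
pose coef' k := coef (- k); have coef'E k : coef' k = coef (- k) by [].
move=> Az0 zp i; rewrite -(opprK i).
apply: (lca_ker_eq0_rbounded (surjective_lca_rev coef'E surj) (z := rev_series z) (p := - p)).
  by move=> j; rewrite (lca_rev _ _ coef'E) Az0.
by move=> j pj; apply: zp; lia.
Qed.

Lemma lca_gap_tail_eq0 (d : series m n) (a p : int) :
  (forall i, a <= i -> A d i = 0) ->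
  (forall t : nat, (t < 2 * r)%N -> d (p + t%:Z) = 0) -> a <= p + r%:Z ->
  forall i, p <= i -> d i = 0.
Proof.
move=> Ad0 gap ap.
pose d' : series m n := fun i => if i < p then 0 else d i.
have d'_below j : j < p -> d' j = 0 by move=> jp; rewrite /d' jp.
have Ad'0 i : A d' i = 0.
  case: (lerP (p + r%:Z) i) => [pri|ipr].
    rewrite -(Ad0 i); last lia.
    by apply: lca_eq_local => t tr; rewrite /d' ltNge ifF //; apply/negbTE; rewrite negbK; lia.
  apply: lca_eq0_local => t tr; rewrite /d'; case: ltP => // pit.
  have -> : i + t = p + `|(i + t - p)%R|%N%:Z by lia.
  by apply: gap; lia.
by move=> i pi; have := lca_ker_eq0_lbounded Ad'0 d'_below i; rewrite /d' ltNge pi.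
Qed.

Lemma lca_eventually_periodic (w : series m n) (T : nat) (a p : int) :
  (forall i, a <= i -> A w i = 0) ->
  (forall t : nat, (t < 2 * r)%N -> w (p + t%:Z + T%:Z) = w (p + t%:Z)) ->
  a <= p + r%:Z -> forall i, p <= i -> w (i + T%:Z) = w i.
Proof.
move=> Aw0 gap ap i pi; apply/eqP; rewrite -subr_eq0; apply/eqP; move: i pi.
apply: (lca_gap_tail_eq0 (fun i => w (i + T%:Z) - w i) a) => // [i ai|t tr].
  by rewrite lcaB lca_shift !Aw0 ?subrr //; lia.
by rewrite gap // subrr.
Qed.

Lemma lca_preimage_degp (v : series m n) : degp_eq v 0 ->
  exists h, - (r%:Z) <= h <= B%:Z /\ exists w, degp_eq w h /\ A w = v.
Proof.
case=> v0 v_above; have [w0 Aw0] := surj v.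
have [j [k [/andP[jk kB] ejk]]] := pigeonhole_nat (fun j => block (2 * r) j.+1%:Z w0).
have {}kB : (k <= B)%N := kB.
set p : int := j.+1%:Z; set T := (k - j)%N.
have T_gt0 : (0 < T)%N by rewrite subn_gt0.
have w0_per : forall i, p <= i -> w0 (i + T%:Z) = w0 i.
  apply: (lca_eventually_periodic w0 T 1) => [i i1|t t2r|]; last lia.
    by rewrite Aw0 v_above //; lia.
  move/(congr1 (col (Ordinal t2r))): ejk; rewrite !col_block /= => ->.
  by congr w0; rewrite /p /T; lia.
pose z := periodic_ext w0 p T.
have Az0 : forall i, A z i = 0.
  apply: (lca_periodic_eq0 (p + r%:Z) T_gt0 (periodic_extD w0_per T_gt0)) => i pri.
  rewrite (lca_eq_local z w0) ?Aw0 ?v_above //; first lia.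
  by move=> t tr; rewrite /z periodic_ext_id //; lia.
pose w : series m n := fun i => w0 i - z i.
have Aw : A w = v.
  by apply: functional_extensionality => i; rewrite lcaB Az0 Aw0 subr0.
have w_above i : p - 1 < i -> w i = 0.
  by move=> pi; rewrite /w /z periodic_ext_id ?subrr //; lia.
have Aw_0 : A w 0 != 0 by rewrite Aw.
have [t tr wt] := lca_neq0_witness w 0 Aw_0.
have [h th [wh wh0]] := degp_eq_exists wt w_above.
have : h <= p - 1 by rewrite leNgt; apply: contra wh => /w_above ->.
rewrite /p => hj; exists h; split; [lia | by exists w].
Qed.

End Preimages.

Theorem lemma3 (m n : nat) (hm : (1 < m)%N) (hn : (1 < n)%N)
  (r : nat) (coef : int -> 'M['Z_m]_n) (hsurj : surjective_lca r coef) :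
  exists c : nat,
    (forall v : series m n, degp_eq v 0 ->
       exists h : int, - (c%:Z) <= h <= c%:Z /\
         exists w : series m n, degp_eq w h /\ assoc_mx_act r coef w = v) /\
    (forall v : series m n, degm_eq v 0 ->
       exists h : int, - (c%:Z) <= h <= c%:Z /\
         exists w : series m n, degm_eq w h /\ assoc_mx_act r coef w = v) /\
    (forall v : series m n, degp_eq v 0 ->
       exists h : int, - (c%:Z) <= h <= c%:Z /\ degp_eq (assoc_mx_act r coef v) h) /\
    (forall v : series m n, degm_eq v 0 ->
       exists h : int, - (c%:Z) <= h <= c%:Z /\ degm_eq (assoc_mx_act r coef v) h).
Proof.
pose coef' k := coef (- k); have coef'E k : coef' k = coef (- k) by [].
have coefE k : coef k = coef' (- k) by rewrite coef'E opprK.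
have hsurj' := surjective_lca_rev coef'E hsurj.
exists (r + #|{: 'M['Z_m]_(n, 2 * r)}|)%N; rewrite /assoc_mx_act.
split; [|split; [|split]] => v.
- by case/(lca_preimage_degp hsurj) => h [hb hw]; exists h; split=> //; lia.
- move/degp_eq_rev; rewrite oppr0 => /(lca_preimage_degp hsurj') [h [hb [w [dw Aw]]]].
  exists (- h); split; first lia.
  exists (rev_series w); split; first exact: degm_eq_rev.
  by apply: functional_extensionality => i; rewrite (lca_rev _ _ coefE) Aw /rev_series opprK.
- by case/(lca_degp hsurj) => h [hb dh]; exists h; split=> //; lia.
- move/degp_eq_rev; rewrite oppr0 => /(lca_degp hsurj') [h [hb dh]].
  exists (- h); split; first lia.
  have -> : lca r coef v = rev_series (lca r coef' (rev_series v)).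
    by apply: functional_extensionality => i; rewrite /rev_series (lca_rev _ _ coef'E) opprK.
  exact: degm_eq_rev.
Qed.
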